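(* Suppose $2\le m\le n$. If $P_1,\dots,P_\ell$ are deterministic perfect channels from $\{1,\dots,m\}$ to $\{1,\dots,n\}$ such that at least one column of $P_1+\cdots+P_\ell$ has more than one nonzero entry, then $\{P_1,\dots,P_\ell\}$ is not $\mathcal{I}$-minimized.
   Context: Channels from $\{1,\dots,m\}$ to $\{1,\dots,n\}$ are $m\times n$ row-stochastic matrices; $\mathcal{D}$ is the set of deterministic (0-1) channels, $\mathrm{rank}(D)$ the matrix rank. A deterministic perfect channel is a deterministic channel of rank $\min(m,n)$. For a channel $W$, $\Lambda(W)=\{\lambda\text{ probability distribution on }\mathcal{D}: W=\sum_D\lambda_DD\}$, $C_{11}(\lambda)=\sum_D\lambda_D\log_2\mathrm{rank}(D)$, $\underline{C}_{11}(W)=\inf_{\lambda\in\Lambda(W)}C_{11}(\lambda)$. A subset $S\subseteq\mathcal{D}$ is $\mathcal{I}$-minimized if there is a probability distribution $\lambda$ on $\mathcal{D}$ with $\mathrm{supp}(\lambda)=S$ and $C_{11}(\lambda)=\underline{C}_{11}(W)$ where $W=\sum_D\lambda_DD$. *)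

From HB Require Import structures.
From mathcomp Require Import all_boot all_order all_algebra.
From mathcomp Require Import classical_sets reals exp.
Set Implicit Arguments. Unset Strict Implicit. Unset Printing Implicit Defensive.
Import Order.TTheory GRing.Theory Num.Theory.
Local Open Scope ring_scope.

(* A deterministic channel from {1..m} to {1..n} is a 0-1 row-stochastic
   m x n matrix; these are in bijection with maps 'I_m -> 'I_n. *)
Definition detfun (m n : nat) := {ffun 'I_m -> 'I_n}.

Definition detmx {R : realType} {m n : nat} (f : detfun m n) : 'M[R]_(m, n) :=
  \matrix_(i < m, j < n) (if f i == j then 1 else 0).

Definition perfect {R : realType} {m n : nat} (f : detfun m n) : bool :=
  \rank (@detmx R m n f) == minn m n.

Definition is_distr {R : realType} {m n : nat} (lam : {ffun detfun m n -> R}) : Prop :=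
  (forall D, 0 <= lam D) /\ \sum_(D : detfun m n) lam D = 1.

Definition supp {R : realType} {m n : nat} (lam : {ffun detfun m n -> R})
  : {set detfun m n} := [set D | lam D != 0].

Definition mix {R : realType} {m n : nat} (lam : {ffun detfun m n -> R}) : 'M[R]_(m, n) :=
  \sum_(D : detfun m n) lam D *: detmx D.

Definition log2 {R : realType} (x : R) : R := ln x / ln 2.

Definition C11 {R : realType} {m n : nat} (lam : {ffun detfun m n -> R}) : R :=
  \sum_(D : detfun m n) lam D * log2 ((\rank (@detmx R m n D))%:R).

Definition Lambda {R : realType} {m n : nat} (W : 'M[R]_(m, n))
  : set {ffun detfun m n -> R} :=
  [set lam | is_distr lam /\ mix lam = W].

Definition lowC11 {R : realType} {m n : nat} (W : 'M[R]_(m, n)) : R :=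
  inf [set C11 lam | lam in Lambda W].

Definition I_minimized {R : realType} {m n : nat} (S : {set detfun m n}) : Prop :=
  exists lam : {ffun detfun m n -> R},
    is_distr lam /\ supp lam = S /\ C11 lam = lowC11 (mix lam).

From HB Require Import structures.
From mathcomp Require Import all_boot all_order all_algebra.
From mathcomp Require Import classical_sets reals exp.
From mathcomp Require Import lra.

Set Implicit Arguments.
Unset Strict Implicit.
Unset Printing Implicit Defensive.
Import Order.TTheory GRing.Theory Num.Theory.
Local Open Scope ring_scope.

(* A column j with two nonzero entries i1 <> i2 comes from two
   channels P, P' of the family with P i1 = j = P' i2; they are distinct
   because perfect channels are injective.  Exchanging the images of i2
   between P and P' gives channels Q, Q' with Q + Q' = P + P', and Q sends
   both i1 and i2 to j, so rank Q < m.  Moving a little weight of any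
   distribution supported on the family from P, P' to Q, Q' keeps the
   channel and strictly lowers C11, so C11 is not minimal. *)

Section Log2.
Variable R : realType.

Lemma log2_nat_ge0 (r : nat) : 0 <= @log2 R r%:R.
Proof.
case: r => [|r]; first by rewrite /log2 ln0 // mul0r.
by rewrite /log2 divr_ge0 // ln_ge0 // ler1n.
Qed.

Lemma ler_log2_nat (r s : nat) : (r <= s)%N -> @log2 R r%:R <= log2 s%:R.
Proof.
case: r => [|r] rs; first by rewrite {1}/log2 ln0 // mul0r log2_nat_ge0.
rewrite /log2 ler_pM2r ?invr_gt0 ?ln_gt0 ?ltr1n //.
by rewrite ler_ln ?posrE ?ltr0n ?ler_nat // (leq_trans _ rs).
Qed.

Lemma ltr_log2_nat (r s : nat) :
  (1 < s)%N -> (r < s)%N -> @log2 R r%:R < log2 s%:R.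
Proof.
move=> s_gt1 rs; rewrite /log2 ltr_pM2r ?invr_gt0 ?ln_gt0 ?ltr1n //.
case: r rs => [|r] rs; first by rewrite ln0 // ln_gt0 ?ltr1n.
by rewrite ltr_ln ?posrE ?ltr0n ?ltr_nat // (leq_trans _ rs).
Qed.

End Log2.

Definition log2_rank (R : realType) (m n : nat) (D : detfun m n) : R :=
  log2 (\rank (@detmx R m n D))%:R.
Arguments log2_rank {R m n} D.

Lemma sum_indicator_scale (R : pzRingType) (V : lmodType R) (T : finType)
    (G : T -> V) (t : T) :
  \sum_(x : T) (x == t)%:R *: G x = G t.
Proof.
rewrite (bigD1 t) //= eqxx scale1r big1 ?addr0 // => x /negPf ->.
by rewrite scale0r.
Qed.

Section Exchange.
Variables (R : realType) (m n : nat) (P P' Q Q' : detfun m n).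

Definition exchange_dir : {ffun detfun m n -> R} :=
  [ffun D => (D == Q)%:R + (D == Q')%:R - (D == P)%:R - (D == P')%:R].

Lemma sum_exchange_dir (V : lmodType R) (G : detfun m n -> V) :
  \sum_D exchange_dir D *: G D = G Q + G Q' - G P - G P'.
Proof.
under eq_bigr => D _ do rewrite ffunE !scalerBl scalerDl.
by rewrite !sumrB big_split /= !sum_indicator_scale.
Qed.

Lemma sumr_exchange_dir (G : detfun m n -> R) :
  \sum_D exchange_dir D * G D = G Q + G Q' - G P - G P'.
Proof. exact: (@sum_exchange_dir R^o). Qed.

Definition exchange (lam : {ffun detfun m n -> R}) (eps : R) :
  {ffun detfun m n -> R} := [ffun D => lam D + eps * exchange_dir D].

Lemma mix_exchange (lam : {ffun detfun m n -> R}) (eps : R) :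
  detmx Q + detmx Q' = detmx P + detmx P' :> 'M[R]_(m, n) ->
  mix (exchange lam eps) = mix lam.
Proof.
move=> sumQ; rewrite /mix.
under eq_bigr => D _ do rewrite ffunE scalerDl -scalerA.
rewrite big_split /= -scaler_sumr sum_exchange_dir -addrA -opprD sumQ.
by rewrite subrr scaler0 addr0.
Qed.

Lemma C11_exchange (lam : {ffun detfun m n -> R}) (eps : R) :
  C11 (exchange lam eps)
  = C11 lam + eps * (log2_rank Q + log2_rank Q' - log2_rank P - log2_rank P').
Proof.
rewrite /C11; under eq_bigr => D _ do rewrite ffunE mulrDl -mulrA.
by rewrite big_split /= -mulr_sumr sumr_exchange_dir.
Qed.

Hypothesis neq_PP' : P != P'.

Lemma exchange_distr (lam : {ffun detfun m n -> R}) (eps : R) :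
  is_distr lam -> 0 <= eps -> eps <= lam P -> eps <= lam P' ->
  is_distr (exchange lam eps).
Proof.
move=> [lam_ge0 lam_sum1] eps_ge0 eps_leP eps_leP'; split=> [D|].
  have lost_le : eps * ((D == P)%:R + (D == P')%:R) <= lam D.
    case: (eqVneq D P) => [->|_]; first by rewrite (negbTE neq_PP') addr0 mulr1.
    case: (eqVneq D P') => [->|_]; first by rewrite add0r mulr1.
    by rewrite addr0 mulr0.
  have gain_ge0 : 0 <= eps * ((D == Q)%:R + (D == Q')%:R) by rewrite mulr_ge0 ?addr_ge0.
  rewrite !ffunE; lra.
have sum_dir0 : \sum_D exchange_dir D = 0.
  have := sumr_exchange_dir (fun=> 1); under eq_bigr => D _ do rewrite mulr1.
  by rewrite addrK subrr.
under eq_bigr => D _ do rewrite ffunE.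
by rewrite big_split /= -mulr_sumr sum_dir0 mulr0 addr0.
Qed.

End Exchange.

Lemma lowC11_le_C11 (R : realType) (m n : nat) (lam : {ffun detfun m n -> R}) :
  is_distr lam -> lowC11 (mix lam) <= C11 lam.
Proof.
move=> lam_distr; apply: ge_inf; last by exists lam.
exists 0 => _ [mu [[mu_ge0 _] _] <-].
by rewrite sumr_ge0 // => D _; rewrite mulr_ge0 ?log2_nat_ge0.
Qed.

Lemma not_I_minimized_exchange (R : realType) (m n : nat) (S : {set detfun m n})
    (P P' Q Q' : detfun m n) :
  P \in S -> P' \in S -> P != P' ->
  detmx Q + detmx Q' = detmx P + detmx P' :> 'M[R]_(m, n) ->
  log2_rank Q + log2_rank Q' < log2_rank P + log2_rank P' :> R ->
  ~ @I_minimized R m n S.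
Proof.
move=> PS P'S neq_PP' sumQ ltC [lam [lam_distr [supp_lam C11_min]]].
have lam_gt0 D : D \in S -> 0 < lam D.
  by rewrite -supp_lam inE lt_def => ->; case: lam_distr => ->.
set eps := Num.min (lam P) (lam P').
have eps_gt0 : 0 < eps by rewrite lt_min !lam_gt0.
have eps_leP : eps <= lam P by rewrite ge_min lexx.
have eps_leP' : eps <= lam P' by rewrite ge_min lexx orbT.
have lam'_distr := exchange_distr Q Q' neq_PP' lam_distr (ltW eps_gt0) eps_leP eps_leP'.
have := lowC11_le_C11 lam'_distr.
rewrite mix_exchange // -C11_min C11_exchange => C11_le.
have : 0 < eps * (log2_rank P + log2_rank P' - (log2_rank Q + log2_rank Q')).
  by rewrite mulr_gt0 // subr_gt0.
lra.
Qed.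

Section DeterministicChannels.
Variables (R : realType) (m n : nat).

Lemma rank_detmx_lt (f : detfun m n) (a b : 'I_m) :
  a != b -> f a = f b -> (\rank (@detmx R m n f) < m)%N.
Proof.
move=> neq_ab fab; set A := @detmx R m n f.
set u : 'rV[R]_m := delta_mx 0 a - delta_mx 0 b.
have u_ker : (u <= kermx A)%MS.
  rewrite sub_kermx /u mulmxBl -!rowE subr_eq0.
  by apply/eqP/rowP => k; rewrite !mxE fab.
have u_neq0 : u != 0.
  apply: contraNneq neq_ab => /matrixP /(_ 0 a).
  by rewrite !mxE !eqxx /=; case: eqP => // _ /eqP; rewrite subr0 oner_eq0.
have : kermx A != 0 by apply: contraNneq u_neq0 => ker0; rewrite -submx0 -ker0.
by rewrite kermx_eq0 /row_free ltn_neqAle rank_leq_row andbT.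
Qed.

Lemma rank_perfect (f : detfun m n) :
  (m <= n)%N -> @perfect R m n f -> \rank (@detmx R m n f) = m.
Proof. by move=> /minn_idPl le_mn /eqP; rewrite le_mn. Qed.

Definition swap_at (f g : detfun m n) (i : 'I_m) : detfun m n :=
  [ffun k => if k == i then g i else f k].

Lemma detmx_swap_at (f g : detfun m n) (i : 'I_m) :
  detmx (swap_at f g i) + detmx (swap_at g f i) = detmx f + detmx g :> 'M[R]_(m, n).
Proof.
apply/matrixP => k l; rewrite !mxE !ffunE.
by have [->|_] := eqVneq k i; rewrite // addrC.
Qed.

Lemma sum_detmx_neq0 (Ps : seq (detfun m n)) (i : 'I_m) (j : 'I_n) :
  (\sum_(P <- Ps) @detmx R m n P) i j != 0 -> exists2 P, P \in Ps & P i = j.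
Proof.
rewrite summxE => sum_neq0.
have /hasP[P PPs /eqP Pij] : has (fun P : detfun m n => P i == j) Ps.
  apply: contraNT sum_neq0 => /hasPn no_P; rewrite big1_seq // => P /andP[_ /no_P].
  by rewrite mxE => /negPf ->.
by exists P.
Qed.

End DeterministicChannels.

Theorem proposition4 (R : realType) (m n : nat) (Ps : seq (detfun m n)) :
  (2 <= m)%N -> (m <= n)%N ->
  (forall P, P \in Ps -> @perfect R m n P) ->
  (exists j : 'I_n,
      (1 < #|[set i : 'I_m | (\sum_(P <- Ps) @detmx R m n P)%R i j != 0%R]|)%N) ->
  ~ @I_minimized R m n [set P in Ps].
Proof.
move=> m_ge2 le_mn perfect_Ps [j /card_gt1P [i1 [i2 []]]].
rewrite !inE => /sum_detmx_neq0 [P PPs Pi1] /sum_detmx_neq0 [P' P'Ps P'i2] neq_i12.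
have rankPs D : D \in Ps -> \rank (@detmx R m n D) = m.
  by move=> DPs; rewrite rank_perfect ?perfect_Ps.
have neq_PP' : P != P'.
  apply: contra_eqN (rankPs _ PPs) => /eqP eq_PP'.
  by rewrite ltn_eqF // (rank_detmx_lt R neq_i12) // Pi1 eq_PP' P'i2.
apply: (@not_I_minimized_exchange _ _ _ _ P P' (swap_at P P' i2) (swap_at P' P i2));
  rewrite ?inE ?detmx_swap_at //.
rewrite /log2_rank (rankPs P) // (rankPs P') //; apply: ltr_leD.
  rewrite ltr_log2_nat //; apply: (rank_detmx_lt R neq_i12).
  by rewrite !ffunE eqxx (negbTE neq_i12) Pi1 P'i2.
by apply: ler_log2_nat; apply: rank_leq_row.
Qed.
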